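(* Let $S$ be a Stone relation algebra and let $C : S\to\mathbb{N}\cup\{\infty\}$ map each $x$ to the number of atoms below $x$. Then: 1. If $S$ is atomic, atom-rectangular and simple, then for all $x\in S$: $x$ is an atom $\iff C(x)=1$. 2. If $S$ is an atomic relation algebra, then for all $x\in S$: $x$ is an atom $\iff C(x)=1$. 3. If $S$ is atom-rectangular, then $C(\top)\le C(1)^2$. 4. If $S$ is atomic and simple with finitely many atoms, then $C(\top)\ge C(1)^2$. 5. If $S$ is atom-rectangular and atom-simple, then $C(\top)=C(1)^2$. 6. If $S$ has finitely many atoms, then $C(\top)\neq\infty$.
   Context: A Stone relation algebra is a structure $(S,\sqcup,\sqcap,\cdot,\overline{\,\cdot\,},{}^{\smile},\bot,\top,1)$ (write $xy$ for $x\cdot y$, $\overline{x}$ for the pseudocomplement, $x^{\smile}$ for the converse) such that: $(S,\sqcup,\sqcap,\bot,\top)$ is a bounded distributive lattice with order $x\sqsubseteq y\iff x\sqcup y=y$; $x\sqcap y=\bot\iff x\sqsubseteq\overline{y}$; $\overline{x}\sqcup\overline{\overline{x}}=\top$; $\cdot$ is associative with two-sided unit $1$, distributes over $\sqcup$ on both sides, and $\bot$ is a zero of $\cdot$; $x^{\smile\smile}=x$, $(xy)^{\smile}=y^{\smile}x^{\smile}$, $(x\sqcup y)^{\smile}=x^{\smile}\sqcup y^{\smile}$; $\overline{\overline{1}}=1$; $\overline{\overline{xy}}=\overline{\overline{x}}\,\overline{\overline{y}}$; $xy\sqcap z\sqsubseteq x(y\sqcap x^{\smile}z)$. A relation algebra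 is a Stone relation algebra with $\overline{\overline{x}}=x$ for all $x$. An atom is an element $x\neq\bot$ such that $\bot\neq y\sqsubseteq x$ implies $y=x$. An element $x$ is a rectangle if $x\top x\sqsubseteq x$, and simple if $\top x\top=\top$. $S$ is simple if every element other than $\bot$ is simple; atomic if every $x\neq\bot$ has an atom below it; atom-rectangular if every atom is a rectangle; atom-simple if every atom is simple. Here $\infty^2=\infty$ and $n\le\infty$. *)

From Stdlib Require Import List Arith Classical ClassicalEpsilon.
Import ListNotations.
Set Implicit Arguments.

Record StoneRA := {
  car :> Type;
  sup : car -> car -> car;
  inf : car -> car -> car;
  comp : car -> car -> car;
  pc : car -> car;
  conv : car -> car;
  bot : car;
  top : car;
  one : car;
  sup_assoc : forall x y z, sup x (sup y z) = sup (sup x y) z;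
  sup_comm : forall x y, sup x y = sup y x;
  sup_idem : forall x, sup x x = x;
  inf_assoc : forall x y z, inf x (inf y z) = inf (inf x y) z;
  inf_comm : forall x y, inf x y = inf y x;
  inf_idem : forall x, inf x x = x;
  sup_absorb : forall x y, sup x (inf x y) = x;
  inf_absorb : forall x y, inf x (sup x y) = x;
  inf_sup_distr : forall x y z, inf x (sup y z) = sup (inf x y) (inf x z);
  sup_bot : forall x, sup x bot = x;
  inf_top : forall x, inf x top = x;
  pc_galois : forall x y, inf x y = bot <-> sup x (pc y) = pc y;
  stone : forall x, sup (pc x) (pc (pc x)) = top;
  comp_assoc : forall x y z, comp x (comp y z) = comp (comp x y) z;
  comp_one_l : forall x, comp one x = x;
  comp_one_r : forall x, comp x one = x;
  comp_sup_l : forall x y z, comp (sup x y) z = sup (comp x z) (comp y z);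
  comp_sup_r : forall x y z, comp x (sup y z) = sup (comp x y) (comp x z);
  comp_bot_l : forall x, comp bot x = bot;
  comp_bot_r : forall x, comp x bot = bot;
  conv_invol : forall x, conv (conv x) = x;
  conv_comp : forall x y, conv (comp x y) = comp (conv y) (conv x);
  conv_sup : forall x y, conv (sup x y) = sup (conv x) (conv y);
  pc_pc_one : pc (pc one) = one;
  pc_pc_comp : forall x y, pc (pc (comp x y)) = comp (pc (pc x)) (pc (pc y));
  dedekind : forall x y z,
    sup (inf (comp x y) z) (comp x (inf y (comp (conv x) z)))
    = comp x (inf y (comp (conv x) z))
}.

Section Defs.
Variable S : StoneRA.

Definition le (x y : S) : Prop := sup S x y = y.

Definition relation_algebra : Prop := forall x : S, pc S (pc S x) = x.

Definition atom (x : S) : Prop :=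
  x <> bot S /\ forall y : S, y <> bot S -> le y x -> y = x.

Definition rectangle (x : S) : Prop :=
  le (comp S (comp S x (top S)) x) x.

Definition simple_el (x : S) : Prop :=
  comp S (comp S (top S) x) (top S) = top S.

Definition simple : Prop := forall x : S, x <> bot S -> simple_el x.
Definition atomic : Prop :=
  forall x : S, x <> bot S -> exists a, atom a /\ le a x.
Definition atom_rectangular : Prop := forall a : S, atom a -> rectangle a.
Definition atom_simple : Prop := forall a : S, atom a -> simple_el a.

Definition finitely_many_atoms : Prop :=
  exists l : list S, forall a, atom a -> In a l.

Definition atoms_below_card (x : S) (n : nat) : Prop :=
  exists l : list S, NoDup l /\ length l = n /\
    forall a, In a l <-> (atom a /\ le a x).

(** C x : number of atoms below x, in N ∪ {∞} (None = ∞). *)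
Definition C (x : S) : option nat :=
  match excluded_middle_informative (exists n, atoms_below_card x n) with
  | left H => Some (proj1_sig (constructive_indefinite_description _ H))
  | right _ => None
  end.
End Defs.

Definition osq (c : option nat) : option nat :=
  match c with Some n => Some (n * n) | None => None end.

Definition ole (a b : option nat) : Prop :=
  match a, b with
  | _, None => True
  | None, Some _ => False
  | Some m, Some n => m <= n
  end.

Arguments le {S} x y.
Arguments atom {S} x.
Arguments rectangle {S} x.
Arguments simple_el {S} x.
Arguments atoms_below_card {S} x n.
Arguments C {S} x.

From Stdlib Require Import List Arith Setoid Classical ClassicalEpsilon.
Import ListNotations.

(* Write d(x) = x⊤ ⊓ 1 and r(x) = ⊤x ⊓ 1.  An atom a that is a rectangle
   factors as a = d(a)⊤r(a) with d(a), r(a) atoms below 1, so in the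
   atom-rectangular case the atoms below ⊤ are among the p⊤q with p, q atoms
   below 1, and C(⊤) ≤ C(1)².  Conversely every atom b below p⊤q has d(b) = p
   and r(b) = q, so choosing one atom below each p⊤q is injective; such an
   atom exists when S is atomic and simple, and p⊤q is itself one when q is a
   simple rectangle.  This gives C(1)² ≤ C(⊤).
   In an atomic algebra an element with a single atom a below it lies below
   the double pseudocomplement of a, so it equals a as soon as a is regular.
   Atoms are regular in relation algebras, and also in atom-rectangular simple
   algebras: a simple rectangle below 1 is regular, and double
   pseudocomplementation preserves the factorisation d(a)⊤r(a). *)

Arguments sup_assoc {s} x y z.
Arguments sup_comm {s} x y.
Arguments sup_idem {s} x.
Arguments inf_assoc {s} x y z.
Arguments inf_comm {s} x y.
Arguments inf_idem {s} x.
Arguments sup_absorb {s} x y.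
Arguments inf_absorb {s} x y.
Arguments sup_bot {s} x.
Arguments inf_top {s} x.
Arguments pc_galois {s} x y.
Arguments comp_assoc {s} x y z.
Arguments comp_one_l {s} x.
Arguments comp_one_r {s} x.
Arguments comp_sup_l {s} x y z.
Arguments comp_sup_r {s} x y z.
Arguments comp_bot_l {s} x.
Arguments conv_invol {s} x.
Arguments conv_comp {s} x y.
Arguments conv_sup {s} x y.
Arguments pc_pc_one {s}.
Arguments pc_pc_comp {s} x y.
Arguments dedekind {s} x y z.

Notation "x ⊔ y" := (sup _ x y) (at level 50, left associativity).
Notation "x ⊓ y" := (inf _ x y) (at level 40, left associativity).
Notation "x · y" := (comp _ x y) (at level 39, left associativity).
Notation "⊤" := (top _).
Notation "⊥" := (bot _).
Notation "𝟙" := (one _).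
Notation "x ≤ y" := (le x y) (at level 70).

#[export] Instance le_preorder (S : StoneRA) : PreOrder (@le S).
Proof.
  split.
  - intro x; apply sup_idem.
  - intros x y z Hxy Hyz; unfold le in *. rewrite <- Hyz, sup_assoc, Hxy; reflexivity.
Qed.

Lemma NoDup_list_prod {A B : Type} (l : list A) (l' : list B) :
  NoDup l -> NoDup l' -> NoDup (list_prod l l').
Proof.
  intros Hl Hl'. induction Hl as [|a l Ha Hl IH]; simpl; [constructor|].
  apply NoDup_app; [| exact IH |].
  - apply NoDup_map_NoDup_ForallPairs; [| exact Hl'].
    intros b b' _ _ E; injection E; auto.
  - intros [a' b] Hab Hab'. apply in_map_iff in Hab as [b' [E _]].
    injection E as -> _. apply in_prod_iff in Hab' as [Hal _]. contradiction.
Qed.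

Lemma exists_NoDup_enum {A : Type} (P : A -> Prop) (l : list A) :
  (forall a, P a -> In a l) -> exists l', NoDup l' /\ forall a, In a l' <-> P a.
Proof.
  intro Hl.
  set (dec := fun a b : A => excluded_middle_informative (a = b)).
  exists (filter (fun a => if excluded_middle_informative (P a) then true else false)
                 (nodup dec l)).
  split; [apply NoDup_filter, NoDup_nodup|].
  intro a. rewrite filter_In, nodup_In.
  destruct (excluded_middle_informative (P a)) as [HP|HnP].
  - split; [intros _; exact HP | intro; split; [apply Hl, HP | reflexivity]].
  - split; [intros [_ E]; discriminate E | intro HP; contradiction].
Qed.

Lemma square_le_length_of_pairing {A B : Type} (L : list A) (l : list B)
    (f : A -> A -> B) (g h : B -> A) :
  NoDup L ->
  (forall p q, In p L -> In q L -> In (f p q) l /\ g (f p q) = p /\ h (f p q) = q) ->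
  length L * length L <= length l.
Proof.
  intros HL Hf.
  rewrite <- length_prod, <- (length_map (fun pq => f (fst pq) (snd pq))).
  apply NoDup_incl_length.
  - apply NoDup_map_NoDup_ForallPairs; [| apply NoDup_list_prod; exact HL].
    intros [p q] [p' q'] Hpq Hpq' E; simpl in E.
    apply in_prod_iff in Hpq as [Hp Hq], Hpq' as [Hp' Hq'].
    destruct (Hf p q Hp Hq) as [_ [Hg Hh]], (Hf p' q' Hp' Hq') as [_ [Hg' Hh']].
    rewrite E in Hg, Hh. congruence.
  - intros b Hb. apply in_map_iff in Hb as [[p q] [<- Hpq]].
    apply in_prod_iff in Hpq as [Hp Hq]. apply Hf; assumption.
Qed.

Section StoneRelationAlgebra.
Context {S : StoneRA}.
Implicit Types x y z a b p q : S.

Lemma le_antisym x y : x ≤ y -> y ≤ x -> x = y.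
Proof. unfold le; intros Hxy Hyx. rewrite <- Hyx, sup_comm; exact Hxy. Qed.

Lemma le_iff_inf x y : x ≤ y <-> x ⊓ y = x.
Proof.
  unfold le; split; intro H.
  - rewrite <- H. apply inf_absorb.
  - rewrite <- H, inf_comm, sup_comm. apply sup_absorb.
Qed.

Lemma inf_le_l x y : x ⊓ y ≤ x.
Proof. apply le_iff_inf. rewrite inf_comm, inf_assoc, inf_idem; reflexivity. Qed.

Lemma inf_le_r x y : x ⊓ y ≤ y.
Proof. apply le_iff_inf. rewrite <- inf_assoc, inf_idem; reflexivity. Qed.

Lemma inf_glb x y z : x ≤ y -> x ≤ z -> x ≤ y ⊓ z.
Proof. rewrite !le_iff_inf; intros Hy Hz. rewrite inf_assoc, Hy, Hz; reflexivity. Qed.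

Lemma inf_mono x y x' y' : x ≤ x' -> y ≤ y' -> x ⊓ y ≤ x' ⊓ y'.
Proof.
  intros Hx Hy. apply inf_glb.
  - etransitivity; [apply inf_le_l | exact Hx].
  - etransitivity; [apply inf_le_r | exact Hy].
Qed.

Lemma le_top x : x ≤ ⊤.
Proof. apply le_iff_inf, inf_top. Qed.

Lemma le_bot x : x ≤ ⊥ -> x = ⊥.
Proof. intro Hx. apply le_antisym; [exact Hx|]. unfold le; rewrite sup_comm; apply sup_bot. Qed.

Lemma le_pc_iff x y : x ≤ pc S y <-> x ⊓ y = ⊥.
Proof. symmetry; apply pc_galois. Qed.

Lemma inf_pc x : x ⊓ pc S x = ⊥.
Proof. rewrite inf_comm; apply le_pc_iff; reflexivity. Qed.

Lemma le_pcpc x : x ≤ pc S (pc S x).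
Proof. apply le_pc_iff, inf_pc. Qed.

Lemma pc_antimono x y : x ≤ y -> pc S y ≤ pc S x.
Proof.
  intro Hxy. apply le_pc_iff, le_bot.
  rewrite <- (inf_pc y), inf_comm. apply inf_mono; [exact Hxy | reflexivity].
Qed.

Lemma pcpc_mono x y : x ≤ y -> pc S (pc S x) ≤ pc S (pc S y).
Proof. intro Hxy; apply pc_antimono, pc_antimono, Hxy. Qed.

Lemma pcpc_top : pc S (pc S ⊤) = ⊤.
Proof. apply le_antisym; [apply le_top | apply le_pcpc]. Qed.

Definition regular x := pc S (pc S x) = x.

Lemma comp_mono_l x y z : x ≤ y -> x · z ≤ y · z.
Proof. unfold le; intro H; rewrite <- comp_sup_l, H; reflexivity. Qed.

Lemma comp_mono_r x y z : x ≤ y -> z · x ≤ z · y.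
Proof. unfold le; intro H; rewrite <- comp_sup_r, H; reflexivity. Qed.

Lemma comp_mono x y x' y' : x ≤ x' -> y ≤ y' -> x · y ≤ x' · y'.
Proof. intros Hx Hy; etransitivity; [apply comp_mono_l, Hx | apply comp_mono_r, Hy]. Qed.

Lemma le_comp_top x : x ≤ x · ⊤.
Proof. rewrite <- (comp_one_r x) at 1. apply comp_mono_r, le_top. Qed.

Lemma top_comp_top : ⊤ · ⊤ = (⊤ : S).
Proof. apply le_antisym; [apply le_top | apply le_comp_top]. Qed.

Lemma comp_top_top x : x · ⊤ · ⊤ = x · ⊤.
Proof. rewrite <- comp_assoc, top_comp_top; reflexivity. Qed.

Lemma comp_top_simple_top x y : simple_el y -> x · ⊤ · y · ⊤ = x · ⊤.
Proof. intro Hy. rewrite <- !comp_assoc, (comp_assoc ⊤ y ⊤), Hy; reflexivity. Qed.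

Lemma conv_mono x y : x ≤ y -> conv S x ≤ conv S y.
Proof. unfold le; intro H; rewrite <- conv_sup, H; reflexivity. Qed.

Lemma conv_le_conv x y : conv S x ≤ conv S y -> x ≤ y.
Proof. intro H; apply conv_mono in H; rewrite !conv_invol in H; exact H. Qed.

Lemma conv_one : conv S 𝟙 = 𝟙.
Proof.
  rewrite <- (comp_one_l (conv S 𝟙)), <- (conv_invol (𝟙 · conv S 𝟙)), conv_comp,
    conv_invol, comp_one_l.
  apply conv_invol.
Qed.

Lemma conv_top : conv S ⊤ = ⊤.
Proof.
  apply le_antisym; [apply le_top|].
  apply conv_le_conv. rewrite conv_invol; apply le_top.
Qed.

Lemma conv_bot : conv S ⊥ = ⊥.
Proof.
  apply le_bot, conv_le_conv. rewrite conv_invol.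
  unfold le; rewrite sup_comm; apply sup_bot.
Qed.

Lemma conv_eq_bot x : conv S x = ⊥ <-> x = ⊥.
Proof.
  split; intro E.
  - rewrite <- (conv_invol x), E; apply conv_bot.
  - rewrite E; apply conv_bot.
Qed.

Lemma conv_inf x y : conv S (x ⊓ y) = conv S x ⊓ conv S y.
Proof.
  apply le_antisym.
  - apply inf_glb; apply conv_mono; [apply inf_le_l | apply inf_le_r].
  - apply conv_le_conv. rewrite conv_invol.
    apply inf_glb; apply conv_le_conv; rewrite conv_invol; [apply inf_le_l | apply inf_le_r].
Qed.

Lemma dedekind_l x y z : x · y ⊓ z ≤ x · (y ⊓ conv S x · z).
Proof. apply dedekind. Qed.

Lemma dedekind_r x y z : y · x ⊓ z ≤ (y ⊓ z · conv S x) · x.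
Proof.
  apply conv_le_conv. rewrite conv_inf, !conv_comp, conv_inf, conv_comp.
  apply dedekind_l.
Qed.

Lemma subid_comp_l p x : p ≤ 𝟙 -> p · x ≤ x.
Proof. intro Hp. rewrite <- (comp_one_l x) at 2. apply comp_mono_l, Hp. Qed.

Lemma subid_comp_r p x : p ≤ 𝟙 -> x · p ≤ x.
Proof. intro Hp. rewrite <- (comp_one_r x) at 2. apply comp_mono_r, Hp. Qed.

Lemma subid_le_conv p : p ≤ 𝟙 -> p ≤ conv S p.
Proof.
  intro Hp. transitivity (p · 𝟙 ⊓ 𝟙).
  { rewrite comp_one_r. apply inf_glb; [reflexivity | exact Hp]. }
  etransitivity; [apply dedekind_l|]. rewrite comp_one_r.
  etransitivity; [apply comp_mono_r, inf_le_r | apply subid_comp_l, Hp].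
Qed.

Lemma subid_conv p : p ≤ 𝟙 -> conv S p = p.
Proof.
  intro Hp. apply le_antisym; [| apply subid_le_conv, Hp].
  rewrite <- (conv_invol p) at 2. apply subid_le_conv.
  rewrite <- conv_one. apply conv_mono, Hp.
Qed.

Definition dom x := x · ⊤ ⊓ 𝟙.
Definition cod x := ⊤ · x ⊓ 𝟙.

Lemma dom_le_one x : dom x ≤ 𝟙.
Proof. apply inf_le_r. Qed.

Lemma cod_le_one x : cod x ≤ 𝟙.
Proof. apply inf_le_r. Qed.

Lemma dom_conv x : dom (conv S x) = cod x.
Proof.
  rewrite <- (subid_conv (cod x)) by apply cod_le_one.
  unfold dom, cod. rewrite conv_inf, conv_comp, conv_top, conv_one; reflexivity.
Qed.

Lemma dom_mono x y : x ≤ y -> dom x ≤ dom y.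
Proof. intro Hxy. apply inf_mono; [apply comp_mono_l, Hxy | reflexivity]. Qed.

Lemma dom_comp_le x y : dom (x · y) ≤ dom x.
Proof. apply inf_mono; [| reflexivity]. rewrite <- comp_assoc. apply comp_mono_r, le_top. Qed.

Lemma le_dom_comp x : x ≤ dom x · x.
Proof.
  transitivity (𝟙 · x ⊓ x). { rewrite comp_one_l, inf_idem; reflexivity. }
  etransitivity; [apply dedekind_r|]. apply comp_mono_l. unfold dom. rewrite inf_comm.
  apply inf_mono; [apply comp_mono_r, le_top | reflexivity].
Qed.

Lemma le_comp_cod x : x ≤ x · cod x.
Proof.
  transitivity (x · 𝟙 ⊓ x). { rewrite comp_one_r, inf_idem; reflexivity. }
  etransitivity; [apply dedekind_l|]. apply comp_mono_r. unfold cod. rewrite inf_comm.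
  apply inf_mono; [apply comp_mono_l, le_top | reflexivity].
Qed.

Lemma dom_subid p : p ≤ 𝟙 -> dom p = p.
Proof.
  intro Hp. apply le_antisym.
  - etransitivity; [apply dedekind_l|]. rewrite comp_one_r, subid_conv by exact Hp.
    etransitivity; [apply comp_mono_r, inf_le_r | apply subid_comp_r, Hp].
  - apply inf_glb; [apply le_comp_top | exact Hp].
Qed.

Lemma cod_subid p : p ≤ 𝟙 -> cod p = p.
Proof. intro Hp. rewrite <- dom_conv, subid_conv by exact Hp. apply dom_subid, Hp. Qed.

Lemma dom_comp_subid p x : p ≤ 𝟙 -> dom (p · x) = p ⊓ dom x.
Proof.
  intro Hp. apply le_antisym.
  - apply inf_glb; [rewrite <- (dom_subid p Hp) at 2; apply dom_comp_le|].
    apply dom_mono, subid_comp_l, Hp.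
  - unfold dom at 2. apply inf_glb.
    + transitivity (p · 𝟙 ⊓ x · ⊤).
      { rewrite comp_one_r. apply inf_mono; [reflexivity | apply inf_le_l]. }
      etransitivity; [apply dedekind_l|]. rewrite <- comp_assoc. apply comp_mono_r.
      etransitivity; [apply inf_le_r|]. rewrite subid_conv by exact Hp. apply subid_comp_l, Hp.
    + etransitivity; [apply inf_le_l | exact Hp].
Qed.

Lemma dom_eq_bot x : dom x = ⊥ <-> x = ⊥.
Proof.
  split; intro E.
  - apply le_bot. rewrite <- (comp_bot_l x), <- E. apply le_dom_comp.
  - unfold dom. rewrite E, comp_bot_l. apply le_bot, inf_le_l.
Qed.

Lemma atom_neq_bot a : atom a -> a <> ⊥.
Proof. intros [Ha _]; exact Ha. Qed.

Lemma atom_eq a y : atom a -> y <> ⊥ -> y ≤ a -> y = a.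
Proof. intros [_ Ha]; apply Ha. Qed.

Lemma atom_conv a : atom a -> atom (conv S a).
Proof.
  intros [Ha Hmin]. split; [rewrite conv_eq_bot; exact Ha|].
  intros y Hy Hya. rewrite <- (conv_invol y). f_equal. apply Hmin.
  - rewrite conv_eq_bot; exact Hy.
  - rewrite <- (conv_invol a). apply conv_mono, Hya.
Qed.

Lemma atom_dom a : atom a -> atom (dom a).
Proof.
  intro Ha. split; [rewrite dom_eq_bot; apply atom_neq_bot, Ha|].
  intros e He Hle.
  assert (He1 : e ≤ 𝟙) by (etransitivity; [exact Hle | apply dom_le_one]).
  assert (He_eq : e ⊓ dom a = e) by (apply le_iff_inf, Hle).
  (* e·a is a nonzero part of the atom a, because d(e·a) = e. *)
  assert (Hea : e · a = a).
  { apply atom_eq; [exact Ha | | apply subid_comp_l, He1].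
    rewrite <- dom_eq_bot, dom_comp_subid, He_eq by exact He1. exact He. }
  rewrite <- Hea, dom_comp_subid by exact He1. symmetry; exact He_eq.
Qed.

Lemma atom_cod a : atom a -> atom (cod a).
Proof. intro Ha. rewrite <- dom_conv. apply atom_dom, atom_conv, Ha. Qed.

Lemma rectangle_eq a : rectangle a -> a = dom a · ⊤ · cod a.
Proof.
  intro Hrect. apply le_antisym.
  - etransitivity; [apply le_dom_comp|]. etransitivity; [apply comp_mono_r, le_comp_cod|].
    rewrite comp_assoc. apply comp_mono_l, comp_mono_r, le_top.
  - etransitivity; [|exact Hrect]. transitivity (a · ⊤ · ⊤ · (⊤ · a)).
    { apply comp_mono; [apply comp_mono_l, inf_le_l | apply inf_le_l]. }
    rewrite !comp_assoc, !comp_top_top; reflexivity.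
Qed.

Lemma pcpc_comp_top_comp x y :
  pc S (pc S (x · ⊤ · y)) = pc S (pc S x) · ⊤ · pc S (pc S y).
Proof. rewrite !pc_pc_comp, pcpc_top; reflexivity. Qed.

Lemma regular_subid_rectangle p : p ≤ 𝟙 -> rectangle p -> simple_el p -> regular p.
Proof.
  intros Hp Hrect Hsimple. unfold regular. set (q := pc S (pc S p)).
  assert (Hq : q ≤ 𝟙) by (unfold q; rewrite <- pc_pc_one; apply pcpc_mono, Hp).
  assert (Hrect_q : q · ⊤ · q ≤ q).
  { unfold q. rewrite <- pcpc_comp_top_comp. apply pcpc_mono, Hrect. }
  assert (Hu : q · ⊤ · p ≤ 𝟙).
  { etransitivity; [apply comp_mono_r, le_pcpc|].
    etransitivity; [exact Hrect_q | exact Hq]. }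
  apply le_antisym; [| apply le_pcpc].
  (* q⊤p is a subidentity with the same domain as q, since ⊤p⊤ = ⊤; so q ≤ ⊤p. *)
  rewrite <- (cod_subid p Hp). apply inf_glb; [| exact Hq].
  transitivity (q · ⊤ · p); [| apply comp_mono_l, le_top].
  rewrite <- (dom_subid (q · ⊤ · p) Hu). unfold dom.
  rewrite comp_top_simple_top by exact Hsimple.
  apply inf_glb; [apply le_comp_top | exact Hq].
Qed.

Lemma atom_regular :
  atom_rectangular S -> simple S -> forall a, atom a -> regular a.
Proof.
  intros Hrect Hsimple a Ha.
  assert (Hreg : forall b, atom b -> b ≤ 𝟙 -> pc S (pc S b) = b).
  { intros b Hb Hb1. apply regular_subid_rectangle;
      [exact Hb1 | apply Hrect, Hb | apply Hsimple, atom_neq_bot, Hb]. }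
  unfold regular. rewrite (rectangle_eq a (Hrect a Ha)) at 1.
  rewrite pcpc_comp_top_comp, Hreg, Hreg;
    [| apply atom_cod, Ha | apply cod_le_one | apply atom_dom, Ha | apply dom_le_one].
  symmetry; apply rectangle_eq, Hrect, Ha.
Qed.

Lemma le_pcpc_of_atoms_below x a :
  atomic S -> atom a -> (forall b, atom b -> b ≤ x -> b = a) -> x ≤ pc S (pc S a).
Proof.
  intros Hatomic Ha Hx. apply le_pc_iff, NNPP. intro Hne.
  destruct (Hatomic _ Hne) as [b [Hb Hbx]].
  assert (b = a) as -> by (apply Hx; [exact Hb | etransitivity; [exact Hbx | apply inf_le_l]]).
  apply (atom_neq_bot a Ha). rewrite <- (inf_idem a). apply le_pc_iff.
  etransitivity; [exact Hbx | apply inf_le_r].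
Qed.

Lemma comp_top_neq_bot p q : p <> ⊥ -> simple_el q -> p · ⊤ · q <> ⊥.
Proof.
  intros Hp Hq Hbot. apply Hp, le_bot. etransitivity; [apply le_comp_top|].
  rewrite <- (comp_top_simple_top p q Hq), Hbot, comp_bot_l; reflexivity.
Qed.

Lemma dom_eq_of_le_comp p x b : atom p -> p ≤ 𝟙 -> b <> ⊥ -> b ≤ p · x -> dom b = p.
Proof.
  intros Hp Hp1 Hb Hbp. apply atom_eq; [exact Hp | rewrite dom_eq_bot; exact Hb |].
  rewrite <- (dom_subid p Hp1). etransitivity; [apply dom_mono, Hbp | apply dom_comp_le].
Qed.

Lemma cod_eq_of_le_comp q x b : atom q -> q ≤ 𝟙 -> b <> ⊥ -> b ≤ x · q -> cod b = q.
Proof.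
  intros Hq Hq1 Hb Hbq. rewrite <- dom_conv.
  apply (dom_eq_of_le_comp q (conv S x)); [exact Hq | exact Hq1 | rewrite conv_eq_bot; exact Hb |].
  rewrite <- (subid_conv q Hq1) at 1. rewrite <- conv_comp. apply conv_mono, Hbq.
Qed.

Lemma comp_top_le_of_le_comp_top p q y :
  q ≤ 𝟙 -> rectangle q -> y ≤ p · ⊤ · q -> p ≤ y · ⊤ -> p · ⊤ · q ≤ y.
Proof.
  intros Hq Hrect Hy Hp.
  (* Dedekind: p⊤q ≤ y⊤q ⊓ p⊤q ≤ y(y˘p⊤q), and y˘p⊤q ≤ q⊤p˘p⊤q ≤ q⊤q ≤ 1. *)
  transitivity (y · (⊤ · q) ⊓ p · ⊤ · q).
  { apply inf_glb; [| reflexivity]. rewrite comp_assoc. apply comp_mono_l.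
    rewrite <- (comp_top_top y). apply comp_mono_l, Hp. }
  etransitivity; [apply dedekind_l|].
  transitivity (y · 𝟙); [apply comp_mono_r | rewrite comp_one_r; reflexivity].
  etransitivity; [apply inf_le_r|].
  transitivity (q · ⊤ · q); [| etransitivity; [exact Hrect | exact Hq]].
  etransitivity; [apply comp_mono_l, conv_mono, Hy|].
  rewrite !conv_comp, conv_top, (subid_conv q Hq), comp_assoc. apply comp_mono_l.
  rewrite <- !comp_assoc. apply comp_mono_r, le_top.
Qed.

Lemma atom_comp_top p q :
  atom p -> p ≤ 𝟙 -> q ≤ 𝟙 -> rectangle q -> simple_el q -> atom (p · ⊤ · q).
Proof.
  intros Hp Hp1 Hq1 Hrect Hsimple.
  split; [apply comp_top_neq_bot; [apply atom_neq_bot, Hp | exact Hsimple]|].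
  intros y Hy Hle. apply le_antisym; [exact Hle|].
  assert (Hdom : dom y = p).
  { apply (dom_eq_of_le_comp _ (⊤ · q)); [exact Hp | exact Hp1 | exact Hy |].
    rewrite comp_assoc; exact Hle. }
  apply comp_top_le_of_le_comp_top; [exact Hq1 | exact Hrect | exact Hle |].
  rewrite <- Hdom; apply inf_le_l.
Qed.

Lemma atoms_below_card_unique x n m :
  atoms_below_card x n -> atoms_below_card x m -> n = m.
Proof.
  intros [l [Hl [<- Hspec]]] [l' [Hl' [<- Hspec']]].
  apply Nat.le_antisymm; apply NoDup_incl_length; try assumption; intros a Ha.
  - apply Hspec', Hspec, Ha.
  - apply Hspec, Hspec', Ha.
Qed.

Lemma C_Some_iff x n : C x = Some n <-> atoms_below_card x n.
Proof.
  unfold C. destruct (excluded_middle_informative _) as [Hex | Hnex].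
  - destruct (constructive_indefinite_description _ Hex) as [m Hm]; simpl. split.
    + intro E; injection E as <-; exact Hm.
    + intro Hn; f_equal; apply (atoms_below_card_unique x); assumption.
  - split; [discriminate | intro Hn; exfalso; apply Hnex; exists n; exact Hn].
Qed.

Lemma C_le_length x l :
  (forall a, atom a -> a ≤ x -> In a l) -> exists n, C x = Some n /\ n <= length l.
Proof.
  intro Hl. destruct (exists_NoDup_enum (fun a => atom a /\ a ≤ x) l) as [l' [Hnd Hl']].
  { intros a [Ha Hax]; apply Hl; assumption. }
  exists (length l'). split.
  - apply C_Some_iff. exists l'; auto.
  - apply NoDup_incl_length; [exact Hnd|]. intros a Ha.
    apply Hl' in Ha as [Ha Hax]. apply Hl; assumption.
Qed.

Lemma C_finite : finitely_many_atoms S -> forall x, exists n, C x = Some n.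
Proof.
  intros [l Hl] x. destruct (C_le_length x l) as [n [Hn _]]; [intros; apply Hl; assumption|].
  exists n; exact Hn.
Qed.

Lemma C_mono x y : x ≤ y -> ole (C x) (C y).
Proof.
  intro Hxy. destruct (C y) as [m|] eqn:Hy; [| destruct (C x); exact I].
  apply C_Some_iff in Hy as [l [_ [<- Hl]]].
  destruct (C_le_length x l) as [n [-> Hn]]; [| exact Hn].
  intros a Ha Hax. apply Hl. split; [exact Ha | etransitivity; eassumption].
Qed.

Lemma atom_iff_C_one :
  atomic S -> (forall a, atom a -> regular a) -> forall x, atom x <-> C x = Some 1.
Proof.
  intros Hatomic Hreg x. rewrite C_Some_iff. split.
  - intro Hx. exists [x]. split; [constructor; [intros [] | constructor] | split; [reflexivity|]].
    intro a; split.
    + intros [<- | []]; split; [exact Hx | reflexivity].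
    + intros [Ha Hax]. left. symmetry. apply atom_eq; [exact Hx | apply atom_neq_bot, Ha | exact Hax].
  - intros [l [_ [Hlen Hl]]]. destruct l as [| a [|]]; try discriminate.
    destruct (proj1 (Hl a) (or_introl eq_refl)) as [Ha Hax].
    assert (Hx : x ≤ pc S (pc S a)).
    { apply le_pcpc_of_atoms_below; [exact Hatomic | exact Ha |].
      intros b Hb Hbx. destruct (proj2 (Hl b) (conj Hb Hbx)) as [-> | []]; reflexivity. }
    rewrite (Hreg a Ha) in Hx. rewrite (le_antisym _ _ Hx Hax). exact Ha.
Qed.

Lemma C_top_le_square : atom_rectangular S -> ole (C (⊤ : S)) (osq (C (𝟙 : S))).
Proof.
  intro Hrect. destruct (C 𝟙) as [n|] eqn:Hone; [| destruct (C ⊤); exact I].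
  apply C_Some_iff in Hone as [L [_ [<- HL]]].
  destruct (C_le_length ⊤ (map (fun pq => fst pq · ⊤ · snd pq) (list_prod L L)))
    as [m [-> Hm]].
  - intros a Ha _. apply in_map_iff. exists (dom a, cod a). split.
    + symmetry. apply rectangle_eq, Hrect, Ha.
    + apply in_prod_iff. split; apply HL; split;
        [apply atom_dom, Ha | apply dom_le_one | apply atom_cod, Ha | apply cod_le_one].
  - rewrite length_map, length_prod in Hm. exact Hm.
Qed.

Lemma square_C_one_le_C_top n m :
  C (𝟙 : S) = Some n -> C (⊤ : S) = Some m ->
  (forall p q, atom p -> p ≤ 𝟙 -> atom q -> q ≤ 𝟙 -> exists b, atom b /\ b ≤ p · ⊤ · q) ->
  n * n <= m.
Proof.
  intros Hone Htop Hex.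
  apply C_Some_iff in Hone as [L [HL [<- HLspec]]].
  apply C_Some_iff in Htop as [l [_ [<- Hlspec]]].
  set (f p q := epsilon (inhabits ⊥) (fun b => atom b /\ b ≤ p · ⊤ · q)).
  apply (square_le_length_of_pairing L l f dom cod HL).
  intros p q Hp Hq.
  apply HLspec in Hp as [Hp Hp1], Hq as [Hq Hq1].
  destruct (epsilon_spec (inhabits ⊥) (fun b => atom b /\ b ≤ p · ⊤ · q) (Hex p q Hp Hp1 Hq Hq1))
    as [Hb Hbpq]; fold (f p q) in Hb, Hbpq.
  split; [apply Hlspec; split; [exact Hb | apply le_top]|]. split.
  - apply (dom_eq_of_le_comp _ (⊤ · q)); [exact Hp | exact Hp1 | apply atom_neq_bot, Hb |].
    rewrite comp_assoc; exact Hbpq.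
  - apply (cod_eq_of_le_comp _ (p · ⊤)); [exact Hq | exact Hq1 | apply atom_neq_bot, Hb | exact Hbpq].
Qed.
End StoneRelationAlgebra.

Theorem mainTheorem5 (S : StoneRA) :
  (atomic S -> atom_rectangular S -> simple S ->
     forall x : S, atom x <-> C x = Some 1) /\
  (atomic S -> relation_algebra S ->
     forall x : S, atom x <-> C x = Some 1) /\
  (atom_rectangular S -> ole (C (top S)) (osq (C (one S)))) /\
  (atomic S -> simple S -> finitely_many_atoms S ->
     ole (osq (C (one S))) (C (top S))) /\
  (atom_rectangular S -> atom_simple S -> C (top S) = osq (C (one S))) /\
  (finitely_many_atoms S -> C (top S) <> None).
Proof.
  split; [| split; [| split; [| split; [| split]]]].
  - intros Hatomic Hrect Hsimple. apply atom_iff_C_one; [exact Hatomic|].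
    apply atom_regular; assumption.
  - intros Hatomic Hra. apply atom_iff_C_one; [exact Hatomic|]. intros a _; apply Hra.
  - apply C_top_le_square.
  - intros Hatomic Hsimple Hfin.
    destruct (C_finite Hfin 𝟙) as [n Hn], (C_finite Hfin ⊤) as [m Hm]. rewrite Hn, Hm.
    apply (square_C_one_le_C_top n m Hn Hm). intros p q Hp _ Hq _.
    apply Hatomic, comp_top_neq_bot; [apply atom_neq_bot, Hp | apply Hsimple, atom_neq_bot, Hq].
  - intros Hrect Hsimple.
    generalize (C_top_le_square Hrect) (C_mono (𝟙 : S) ⊤ (le_top 𝟙)).
    destruct (C 𝟙) as [n|] eqn:Hn, (C ⊤) as [m|] eqn:Hm; simpl; intros Hle Hge;
      try contradiction; [| reflexivity].
    f_equal. apply Nat.le_antisymm; [exact Hle|].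
    apply (square_C_one_le_C_top n m Hn Hm). intros p q Hp Hp1 Hq Hq1.
    exists (p · ⊤ · q). split; [| reflexivity].
    apply atom_comp_top; [exact Hp | exact Hp1 | exact Hq1 | apply Hrect, Hq | apply Hsimple, Hq].
  - intros Hfin. destruct (C_finite Hfin ⊤) as [m ->]. discriminate.
Qed.
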